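(* For every instance such that $|S_2|=1$ and $\pi_1+\pi_3+\pi_4-1=0$, we have $H^{PW''}\le \tfrac{20}{11}H^*$.
   Context: An instance consists of an integer $n\ge 1$ and growth rates $1=h(1)\ge h(2)\ge\cdots\ge h(n)>0$ of bamboos $b_1,\dots,b_n$. Bamboo Garden Trimming (discrete version): - All heights are $0$ initially. - On each day $t=1,2,\dots$ every bamboo $b_j$ grows by $h(j)$. - At the end of each day the gardener cuts exactly one bamboo $\sigma(t)\in\{1,\dots,n\}$ back to height $0$. The height of a schedule $\sigma:\mathbb{N}\to\{1,\dots,n\}$ is the supremum, over all days $t$ and all $j$, of the height of $b_j$ at the end of day $t$ just before the cut. $H^*$ denotes the infimum of this height over all schedules. Value of algorithm PW'': - Split $\{1,\dots,n\}$ into four sets: - $S_1=\{j: \tfrac23<h(j)\le 1\}$; - $S_2=\{j:\tfrac12<h(j)\le\tfrac23\}$; - $S_3=\{j: h(j)\le\tfrac12 \text{ and } \tfrac23 2^{-k}<h(j)\le 2^{-k}\text{ for some integer }k\ge1\}$; - $S_4=\{j: h(j)\le\tfrac12\text{ and } 2^{-(k+1)}<h(j)\le \tfrac23 2^{-k}\text{ for some integer }k\ge 1\}$. - Modified growths: $h''(j)=2^{-k}$ for $j\in S_3$ and $h''(j)=\tfrac23 2^{-k}$ for $j\in S_4$, with $k$ as in the definition of the set. - Let $\pi_1=|S_1|$, $sh_3=\sum_{j\in S_3}h''(j)$, $sh_4=\sum_{j\in S_4}h''(j)$, $\pi_3=\lfloor sh_3\rfloor$, $\pi_4=\lfloor sh_4\rfloor$,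 $f_3=sh_3-\pi_3$, $f_4=sh_4-\pi_4$. - Option (a): $\pi_R(a)=\lceil f_3+f_4\rceil$ and $z(a)=\pi_1+|S_2|+\pi_3+\pi_4+\pi_R(a)$. - Option (b): if $S_2=\emptyset$ put $z(b)=+\infty$. Otherwise let $h^*=\max_{j\in S_2}h(j)$ and $f_2=\tfrac12$ if $|S_2|$ is odd, $f_2=0$ if $|S_2|$ is even. Then $\pi_R(b)=\lceil f_2+f_3+f_4\rceil$ and $z(b)=2h^*\,(\pi_1+\lfloor |S_2|/2\rfloor+\pi_3+\pi_4+\pi_R(b))$. - The value returned by algorithm PW'' is $H^{PW''}=\min\{z(a),z(b)\}$. The paper takes this as the maximum height of the periodic pinwheel trimming schedule that it builds from these partitions. *)

From Stdlib Require Import Reals Arith.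
Open Scope R_scope.

Fixpoint sumR (n : nat) (f : nat -> R) : R :=
  match n with 0%nat => 0 | S m => sumR m f + f (S m) end.

Fixpoint maxR (n : nat) (f : nat -> R) : R :=
  match n with 0%nat => 0 | S m => Rmax (maxR m f) (f (S m)) end.

Fixpoint countN (n : nat) (b : nat -> bool) : nat :=
  match n with 0%nat => 0%nat | S m => (countN m b + (if b (S m) then 1 else 0))%nat end.

Definition Rltb (x y : R) : bool := if Rlt_dec x y then true else false.
Definition Rleb (x y : R) : bool := if Rle_dec x y then true else false.

(* floor and ceiling; Int_part x = up x - 1 is the floor of x *)
Definition Rfloor (x : R) : R := IZR (Int_part x).
Definition Rceil (x : R) : R := - Rfloor (- x).

Definition instance (n : nat) (h : nat -> R) : Prop :=
  (1 <= n)%nat /\ h 1%nat = 1 /\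
  (forall j, (1 <= j)%nat -> (j < n)%nat -> h (S j) <= h j) /\
  0 < h n.

(* A schedule cuts, at the end of each day t >= 1, a bamboo in {1..n}. *)
Definition schedule (n : nat) (sigma : nat -> nat) : Prop :=
  forall t, (1 <= t)%nat -> (1 <= sigma t)%nat /\ (sigma t <= n)%nat.

(* height of bamboo j at the end of day t, just before the cut of day t
   (day 0 = initial state, height 0) *)
Fixpoint height_before (h : nat -> R) (sigma : nat -> nat) (j t : nat) : R :=
  match t with
  | 0%nat => 0
  | S t' =>
      (match t' with
       | 0%nat => 0
       | S _ => if Nat.eqb (sigma t') j then 0 else height_before h sigma j t'
       end) + h j
  end.

Definition heights (n : nat) (h : nat -> R) (sigma : nat -> nat) (x : R) : Prop :=
  exists t j, (1 <= t)%nat /\ (1 <= j)%nat /\ (j <= n)%nat /\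
              x = height_before h sigma j t.

(* values of (finite) heights of schedules: the height of sigma is the
   supremum of its heights *)
Definition schedule_height_value (n : nat) (h : nat -> R) (x : R) : Prop :=
  exists sigma, schedule n sigma /\ is_lub (heights n h sigma) x.

Definition is_glb (E : R -> Prop) (m : R) : Prop :=
  (forall x, E x -> m <= x) /\ (forall b, (forall x, E x -> b <= x) -> b <= m).

Definition is_Hstar (n : nat) (h : nat -> R) (Hs : R) : Prop :=
  is_glb (schedule_height_value n h) Hs.

(* k j is the integer k >= 1 with 2^-(k+1) < h j <= 2^-k (for h j <= 1/2);
   it is passed as a parameter and characterised by a hypothesis. *)

Definition valid_k (n : nat) (h : nat -> R) (k : nat -> nat) : Prop :=
  forall j, (1 <= j)%nat -> (j <= n)%nat -> h j <= 1/2 ->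
    (1 <= k j)%nat /\ (/2) ^ (S (k j)) < h j /\ h j <= (/2) ^ (k j).

Section PW.
Variables (n : nat) (h : nat -> R) (k : nat -> nat).

Definition inS1 (j : nat) : bool := Rltb (2/3) (h j) && Rleb (h j) 1.
Definition inS2 (j : nat) : bool := Rltb (1/2) (h j) && Rleb (h j) (2/3).
Definition inS3 (j : nat) : bool :=
  Rleb (h j) (1/2) && Rltb (2/3 * (/2) ^ (k j)) (h j) && Rleb (h j) ((/2) ^ (k j)).
Definition inS4 (j : nat) : bool :=
  Rleb (h j) (1/2) && Rltb ((/2) ^ (S (k j))) (h j) && Rleb (h j) (2/3 * (/2) ^ (k j)).

Definition pi1 : R := INR (countN n inS1).
Definition cardS2 : nat := countN n inS2.
Definition sh3 : R := sumR n (fun j => if inS3 j then (/2) ^ (k j) else 0).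
Definition sh4 : R := sumR n (fun j => if inS4 j then 2/3 * (/2) ^ (k j) else 0).
Definition pi3 : R := Rfloor sh3.
Definition pi4 : R := Rfloor sh4.
Definition f3 : R := sh3 - pi3.
Definition f4 : R := sh4 - pi4.

Definition z_a : R := pi1 + INR cardS2 + pi3 + pi4 + Rceil (f3 + f4).

Definition hstar : R := maxR n (fun j => if inS2 j then h j else 0).
Definition f2 : R := if Nat.odd cardS2 then 1/2 else 0.
Definition z_b : R :=
  2 * hstar * (pi1 + INR (Nat.div2 cardS2) + pi3 + pi4 + Rceil (f2 + f3 + f4)).

(* min{z(a), z(b)} with z(b) = +infinity when S2 is empty *)
Definition H_PW : R := if Nat.eqb cardS2 0 then z_a else Rmin z_a z_b.

End PW.

(* Only one bamboo is cut per day, so under any schedule whose heights stay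
   below v the total growth T * sum h over T days is at most v * (T + n);
   letting T grow gives H^* >= sum_j h(j).  Under the hypotheses b_1 is the
   only bamboo of S_1 and pi_3 = pi_4 = 0, so with y = h^* and x = sh_3 + sh_4
   (the modified rates satisfy h'' <= 3/2 h) we get
   sum_j h(j) >= 1 + y + 2/3 x, while z(a) = 2 + ceil x and
   z(b) = 2y (1 + ceil (1/2 + x)).  Splitting x in [0, 2) at 0, 1/2, 1 and 3/2
   and using 1/2 < y <= 2/3, one of the two options is always within
   20/11 of 1 + y + 2/3 x. *)
From Stdlib Require Import Reals Arith.
From Stdlib Require Import Lra Lia ZArith.
Open Scope R_scope.

Lemma sumR_add n f g : sumR n (fun j => f j + g j) = sumR n f + sumR n g.
Proof. induction n as [|n IH]; simpl; [lra | rewrite IH; lra]. Qed.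

Lemma sumR_scal_l n c f : sumR n (fun j => c * f j) = c * sumR n f.
Proof. induction n as [|n IH]; simpl; [lra | rewrite IH; lra]. Qed.

Lemma sumR_scal_r n f c : sumR n (fun j => f j * c) = sumR n f * c.
Proof. induction n as [|n IH]; simpl; [lra | rewrite IH; lra]. Qed.

Lemma sumR_const n c : sumR n (fun _ => c) = INR n * c.
Proof. induction n as [|n IH]; simpl sumR; [simpl; lra | rewrite S_INR, IH; lra]. Qed.

Lemma sumR_le n f g :
  (forall j, (1 <= j)%nat -> (j <= n)%nat -> f j <= g j) -> sumR n f <= sumR n g.
Proof.
  induction n as [|n IH]; intros Hfg; simpl; [lra|].
  assert (sumR n f <= sumR n g) by (apply IH; intros; apply Hfg; lia).
  assert (f (S n) <= g (S n)) by (apply Hfg; lia).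
  lra.
Qed.

Lemma sumR_nonneg n f :
  (forall j, (1 <= j)%nat -> (j <= n)%nat -> 0 <= f j) -> 0 <= sumR n f.
Proof.
  intros Hf. rewrite <- (Rmult_0_r (INR n)), <- sumR_const.
  apply sumR_le; exact Hf.
Qed.

Lemma sumR_ge_term n f i : (1 <= i)%nat -> (i <= n)%nat ->
  (forall j, (1 <= j)%nat -> (j <= n)%nat -> 0 <= f j) -> f i <= sumR n f.
Proof.
  induction n as [|n IH]; intros Hi Hin Hf; [lia|]. simpl.
  assert (0 <= f (S n)) by (apply Hf; lia).
  destruct (Nat.eq_dec i (S n)) as [-> | Hne].
  - assert (0 <= sumR n f) by (apply sumR_nonneg; intros; apply Hf; lia). lra.
  - assert (f i <= sumR n f) by (apply IH; [lia | lia | intros; apply Hf; lia]). lra.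
Qed.

Lemma sumR_indicator_out m n :
  (n < m)%nat -> sumR n (fun j => if Nat.eqb m j then 1 else 0) = 0.
Proof.
  induction n as [|n IH]; intros Hnm; simpl; [lra|].
  rewrite IH by lia.
  destruct (Nat.eqb_spec m (S n)); [lia | lra].
Qed.

Lemma sumR_indicator m n : (1 <= m)%nat -> (m <= n)%nat ->
  sumR n (fun j => if Nat.eqb m j then 1 else 0) = 1.
Proof.
  induction n as [|n IH]; intros H1m Hmn; [lia|]. simpl.
  destruct (Nat.eqb_spec m (S n)) as [-> | Hne].
  - rewrite sumR_indicator_out by lia. lra.
  - rewrite IH by lia. lra.
Qed.

Lemma maxR_ge n f j : (1 <= j)%nat -> (j <= n)%nat -> f j <= maxR n f.
Proof.
  induction n as [|n IH]; intros H1j Hjn; [lia|]. simpl.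
  destruct (Nat.eq_dec j (S n)) as [-> | Hne].
  - apply Rmax_r.
  - eapply Rle_trans; [apply IH; lia | apply Rmax_l].
Qed.

Lemma maxR_le n f c : 0 <= c ->
  (forall j, (1 <= j)%nat -> (j <= n)%nat -> f j <= c) -> maxR n f <= c.
Proof.
  induction n as [|n IH]; intros Hc Hf; simpl; [lra|].
  apply Rmax_lub; [apply IH; auto; intros; apply Hf; lia | apply Hf; lia].
Qed.

Lemma maxR_le_sumR n f :
  (forall j, (1 <= j)%nat -> (j <= n)%nat -> 0 <= f j) -> maxR n f <= sumR n f.
Proof.
  induction n as [|n IH]; intros Hf; simpl; [lra|].
  assert (maxR n f <= sumR n f) by (apply IH; intros; apply Hf; lia).
  assert (0 <= sumR n f) by (apply sumR_nonneg; intros; apply Hf; lia).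
  assert (0 <= f (S n)) by (apply Hf; lia).
  apply Rmax_lub; lra.
Qed.

Lemma countN_witness n b :
  countN n b <> 0%nat -> exists j, (1 <= j)%nat /\ (j <= n)%nat /\ b j = true.
Proof.
  induction n as [|n IH]; simpl; intros Hc; [lia|].
  destruct (b (S n)) eqn:Eb.
  - exists (S n); repeat split; auto; lia.
  - destruct IH as [j (? & ? & ?)]; [lia|]. exists j; repeat split; auto; lia.
Qed.

Lemma countN_ge1 n b i : (1 <= i)%nat -> (i <= n)%nat -> b i = true ->
  (1 <= countN n b)%nat.
Proof.
  induction n as [|n IH]; intros Hi Hin Hb; [lia|]. simpl.
  destruct (Nat.eq_dec i (S n)) as [-> | Hne].
  - rewrite Hb. lia.
  - specialize (IH Hi ltac:(lia) Hb). lia.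
Qed.

Lemma Rfloor_nonneg x : 0 <= x -> 0 <= Rfloor x.
Proof.
  intros Hx. unfold Rfloor. destruct (base_Int_part x) as [_ Hlt].
  assert (Hgt : IZR (Int_part x) > IZR (-1)) by lra.
  apply lt_IZR in Hgt. apply IZR_le. lia.
Qed.

Lemma Rfloor_eq0_lt1 x : Rfloor x = 0 -> x < 1.
Proof. unfold Rfloor. intros H0. destruct (base_Int_part x) as [_ Hlt]. lra. Qed.

Lemma Rceil_le_IZR x (m : Z) : x <= IZR m -> Rceil x <= IZR m.
Proof.
  intros Hx. unfold Rceil, Rfloor. destruct (base_Int_part (- x)) as [_ Hlt].
  assert (Hgt : IZR (Int_part (- x)) > IZR (- m - 1))
    by (rewrite minus_IZR, opp_IZR; lra).
  apply lt_IZR in Hgt.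
  assert (Hle : IZR (- m) <= IZR (Int_part (- x))) by (apply IZR_le; lia).
  rewrite opp_IZR in Hle. lra.
Qed.

Lemma nat_unbounded r : exists T : nat, r < INR T.
Proof.
  destruct (Rle_or_lt r 0) as [Hr | Hr].
  - exists 1%nat. simpl. lra.
  - destruct (archimed r) as [Hup _].
    assert (0 < up r)%Z by (apply lt_IZR; lra).
    exists (Z.to_nat (up r)). rewrite INR_IZR_INZ, Z2Nat.id by lia. lra.
Qed.

Section HeightLowerBound.
Variables (n : nat) (h : nat -> R) (sigma : nat -> nat).

Fixpoint cut_count (j T : nat) : R :=
  match T with
  | 0%nat => 0
  | S T' => cut_count j T' + (if Nat.eqb (sigma (S T')) j then 1 else 0)
  end.

(* Each cut of b_j removes at most v of its accumulated growth. *)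
Lemma growth_le_cuts j v :
  (forall t, (1 <= t)%nat -> height_before h sigma j t <= v) ->
  forall T, h j * INR (S T) <= v * cut_count j T + height_before h sigma j (S T).
Proof.
  intros Hv T. induction T as [|T IH].
  - simpl. lra.
  - assert (height_before h sigma j (S T) <= v) by (apply Hv; lia).
    change (height_before h sigma j (S (S T))) with
      ((if Nat.eqb (sigma (S T)) j then 0 else height_before h sigma j (S T)) + h j).
    rewrite S_INR. simpl cut_count.
    destruct (Nat.eqb (sigma (S T)) j); lra.
Qed.

Lemma sumR_cut_count T :
  schedule n sigma -> sumR n (fun j => cut_count j T) = INR T.
Proof.
  intros Hsched. induction T as [|T IH].
  - change (sumR n (fun _ => 0) = INR 0). rewrite sumR_const. simpl. lra.
  - simpl cut_count. rewrite sumR_add, IH.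
    destruct (Hsched (S T)) as [H1 H2]; [lia|].
    rewrite sumR_indicator by auto. rewrite S_INR. lra.
Qed.

Lemma sumR_le_height_bound v :
  schedule n sigma ->
  (forall t j, (1 <= t)%nat -> (1 <= j)%nat -> (j <= n)%nat ->
     height_before h sigma j t <= v) ->
  sumR n h <= v.
Proof.
  intros Hsched Hv.
  assert (Hgrowth : forall T, sumR n h * INR (S T) <= v * (INR T + INR n)).
  { intros T.
    assert (Hsum : sumR n (fun j => h j * INR (S T))
                   <= sumR n (fun j => v * (cut_count j T + 1))).
    { apply sumR_le. intros j H1 H2.
      pose proof (growth_le_cuts j v (fun t Ht => Hv t j Ht H1 H2) T).
      assert (height_before h sigma j (S T) <= v) by (apply Hv; lia). lra. }
    rewrite sumR_scal_l, sumR_add, sumR_cut_count, sumR_const in Hsum by exact Hsched.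
    rewrite sumR_scal_r in Hsum.
    lra. }
  destruct (Rle_or_lt (sumR n h) v) as [Hle | Hlt]; [exact Hle|].
  destruct (nat_unbounded ((v * INR n - sumR n h) / (sumR n h - v))) as [T HT].
  specialize (Hgrowth T). rewrite S_INR in Hgrowth.
  apply (Rmult_lt_compat_r (sumR n h - v)) in HT; [|lra].
  unfold Rdiv in HT. rewrite Rmult_assoc, Rinv_l in HT; lra.
Qed.

End HeightLowerBound.

Lemma Hstar_ge_sumR n h Hs : is_Hstar n h Hs -> sumR n h <= Hs.
Proof.
  intros [_ Hglb]. apply Hglb. intros x [sigma [Hsched [Hub _]]].
  apply (sumR_le_height_bound n h sigma); auto.
  intros t j H1 H2 H3. apply Hub. exists t, j. repeat split; auto.
Qed.

Lemma instance_pos n h : instance n h -> forall j, (1 <= j)%nat -> (j <= n)%nat -> 0 < h j.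
Proof.
  intros (_ & _ & Hdec & Hn).
  assert (Hd : forall d j, (1 <= j)%nat -> (j + d = n)%nat -> 0 < h j).
  { induction d as [|d IH]; intros j Hj Hjd.
    - replace j with n by lia. exact Hn.
    - assert (0 < h (S j)) by (apply IH; lia).
      assert (h (S j) <= h j) by (apply Hdec; lia). lra. }
  intros j Hj Hjn. apply (Hd (n - j)%nat); lia.
Qed.

(* The modified rates h'' of S_3 and S_4 are at most 3/2 times the true ones. *)
Lemma class_contributions_le h k j : 0 <= h j ->
  (if inS1 h j then h j else 0) + (if inS2 h j then h j else 0)
  + 2/3 * ((if inS3 h k j then (/2) ^ (k j) else 0)
           + (if inS4 h k j then 2/3 * (/2) ^ (k j) else 0)) <= h j.
Proof.
  intros Hj.
  assert (0 < (/2) ^ (k j)) by (apply pow_lt; lra).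
  unfold inS1, inS2, inS3, inS4, Rltb, Rleb. simpl pow.
  repeat destruct (Rlt_dec _ _); repeat destruct (Rle_dec _ _); simpl; lra.
Qed.

Lemma inS1_first h : h 1%nat = 1 -> inS1 h 1 = true.
Proof.
  intros H1. unfold inS1, Rltb, Rleb. rewrite H1.
  destruct (Rlt_dec _ _); destruct (Rle_dec _ _); simpl; auto; lra.
Qed.

Lemma sh3_nonneg n h k : 0 <= sh3 n h k.
Proof.
  apply sumR_nonneg. intros j _ _.
  destruct (inS3 h k j); [apply pow_le; lra | lra].
Qed.

Lemma sh4_nonneg n h k : 0 <= sh4 n h k.
Proof.
  apply sumR_nonneg. intros j _ _.
  destruct (inS4 h k j); [|lra].
  assert (0 <= (/2) ^ (k j)) by (apply pow_le; lra). lra.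
Qed.

Lemma hstar_bounds n h : cardS2 n h <> 0%nat -> 1/2 < hstar n h <= 2/3.
Proof.
  intros Hcard. split.
  - destruct (countN_witness n (inS2 h) Hcard) as [j (H1 & H2 & Hj)].
    pose proof (maxR_ge n (fun j => if inS2 h j then h j else 0) j H1 H2) as Hmax.
    simpl in Hmax. rewrite Hj in Hmax.
    unfold inS2, Rltb in Hj. destruct (Rlt_dec _ _); simpl in Hj; [|discriminate].
    unfold hstar. lra.
  - apply maxR_le; [lra|]. intros j _ _.
    unfold inS2, Rltb, Rleb.
    destruct (Rlt_dec _ _); destruct (Rle_dec _ _); simpl; lra.
Qed.

Lemma sumR_ge_classes n h k : instance n h ->
  1 + hstar n h + 2/3 * (sh3 n h k + sh4 n h k) <= sumR n h.
Proof.
  intros Hinst. pose proof Hinst as (Hn & H1 & _).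
  pose proof (instance_pos n h Hinst) as Hpos.
  eapply Rle_trans;
    [| apply sumR_le; intros j Hj Hjn; apply (class_contributions_le h k j);
       left; apply Hpos; auto].
  rewrite !sumR_add, sumR_scal_l, sumR_add.
  assert (1 <= sumR n (fun j => if inS1 h j then h j else 0)).
  { pose proof (sumR_ge_term n (fun j => if inS1 h j then h j else 0) 1 (le_n 1) Hn)
      as Hterm.
    simpl in Hterm. rewrite inS1_first, H1 in Hterm by exact H1.
    apply Hterm. intros j Hj Hjn. destruct (inS1 h j); [left; apply Hpos; auto | lra]. }
  assert (hstar n h <= sumR n (fun j => if inS2 h j then h j else 0)).
  { apply maxR_le_sumR. intros j Hj Hjn.
    destruct (inS2 h j); [left; apply Hpos; auto | lra]. }
  unfold sh3, sh4. lra.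
Qed.

Lemma H_PW_single_S2 n h k :
  cardS2 n h = 1%nat -> pi1 n h = 1 -> pi3 n h k = 0 -> pi4 n h k = 0 ->
  H_PW n h k = Rmin (2 + Rceil (sh3 n h k + sh4 n h k))
                    (2 * hstar n h * (1 + Rceil (1/2 + (sh3 n h k + sh4 n h k)))).
Proof.
  intros Hcard E1 E3 E4.
  unfold H_PW, z_a, z_b, f2, f3, f4. rewrite Hcard, E1, E3, E4. simpl.
  rewrite !Rminus_0_r.
  replace (1/2 + sh3 n h k + sh4 n h k) with (1/2 + (sh3 n h k + sh4 n h k)) by ring.
  f_equal; ring.
Qed.

Lemma PW_options_le x y : 1/2 < y <= 2/3 -> 0 <= x < 2 ->
  Rmin (2 + Rceil x) (2 * y * (1 + Rceil (1/2 + x))) <= 20/11 * (1 + y + 2/3 * x).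
Proof.
  intros Hy Hx.
  set (z := Rmin (2 + Rceil x) (2 * y * (1 + Rceil (1/2 + x)))).
  assert (Ha : forall m : Z, x <= IZR m -> z <= 2 + IZR m).
  { intros m Hm. eapply Rle_trans; [apply Rmin_l|].
    pose proof (Rceil_le_IZR x m Hm). lra. }
  assert (Hb : forall m : Z, 1/2 + x <= IZR m -> z <= 2 * y * (1 + IZR m)).
  { intros m Hm. eapply Rle_trans; [apply Rmin_r|].
    pose proof (Rceil_le_IZR (1/2 + x) m Hm). nra. }
  destruct (Rle_or_lt x 0); [specialize (Ha 0%Z); simpl in Ha; lra|].
  destruct (Rle_or_lt x (1/2)); [specialize (Hb 1%Z); simpl in Hb; nra|].
  destruct (Rle_or_lt x 1); [specialize (Ha 1%Z); simpl in Ha; lra|].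
  destruct (Rle_or_lt x (3/2)); [specialize (Hb 2%Z); simpl in Hb; nra|].
  specialize (Ha 2%Z); simpl in Ha; lra.
Qed.

Theorem proposition7 (n : nat) (h : nat -> R) (k : nat -> nat) (Hs : R) :
  instance n h ->
  valid_k n h k ->
  cardS2 n h = 1%nat ->
  pi1 n h + pi3 n h k + pi4 n h k - 1 = 0 ->
  is_Hstar n h Hs ->
  H_PW n h k <= 20/11 * Hs.
Proof.
  intros Hinst _ Hcard Hpi HHs.
  pose proof Hinst as (Hn & H1 & _).
  assert (Hpi1 : 1 <= pi1 n h).
  { apply (le_INR 1). exact (countN_ge1 n (inS1 h) 1 (le_n 1) Hn (inS1_first h H1)). }
  pose proof (Rfloor_nonneg _ (sh3_nonneg n h k)) as Hpi3.
  pose proof (Rfloor_nonneg _ (sh4_nonneg n h k)) as Hpi4.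
  unfold pi3, pi4 in Hpi.
  assert (E3 : Rfloor (sh3 n h k) = 0) by lra.
  assert (E4 : Rfloor (sh4 n h k) = 0) by lra.
  rewrite (H_PW_single_S2 n h k Hcard) by (unfold pi3, pi4; lra).
  eapply Rle_trans; [apply PW_options_le|].
  - apply hstar_bounds. lia.
  - pose proof (Rfloor_eq0_lt1 _ E3). pose proof (Rfloor_eq0_lt1 _ E4).
    pose proof (sh3_nonneg n h k). pose proof (sh4_nonneg n h k). lra.
  - pose proof (sumR_ge_classes n h k Hinst). pose proof (Hstar_ge_sumR n h Hs HHs).
    lra.
Qed.
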